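(* Let $\mathcal{P}_1,\dots,\mathcal{P}_k$ be finite posets such that $\mathcal{C}(\mathcal{P}_j)$ has $q_j$ extremal rays, ordered so that $q_1\le\cdots\le q_k$. Then every tensor in $\otimes_{j=1}^k\mathcal{C}(\mathcal{P}_j)$ has ND rank at most $\prod_{j=1}^{k-1}q_j$; that is, the maximum ND rank in $\otimes_{j=1}^k\mathcal{C}(\mathcal{P}_j)$ is at most $\prod_{j=1}^{k-1}q_j$.
   Context: For a finite poset $\mathcal{Q}$, the order cone $\mathcal{C}(\mathcal{Q})$ is the set of functions $\mathbf{f}$ on $\mathcal{Q}$ with $f_x\ge0$ for all $x$ and $f_x\le f_y$ whenever $x\preceq y$; it is a polyhedral cone, and an extremal ray is a one-dimensional face. $\otimes_{j}\mathcal{C}(\mathcal{P}_j)$ is the set of tensors $\sum_{i=1}^r\otimes_{j=1}^k\mathbf{v}^{(ij)}$ (finite $r$) with $\mathbf{v}^{(ij)}\in\mathcal{C}(\mathcal{P}_j)$. The ND rank of such a tensor is the minimal such $r$; the maximum ND rank is the supremum of the finite ND ranks attained. *)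

From HB Require Import structures.
From mathcomp Require Import all_boot all_order all_algebra.
From mathcomp Require Import reals.
Set Implicit Arguments. Unset Strict Implicit. Unset Printing Implicit Defensive.
Import Order.TTheory GRing.Theory Num.Theory.
Local Open Scope ring_scope.

Definition order_cone (R : realType) (d : Order.disp_t) (P : finPOrderType d)
  (f : P -> R) : Prop :=
  (forall x, 0 <= f x) /\ (forall x y : P, (x <= y)%O -> f x <= f y).

Definition on_ray (R : realType) (T : Type) (f g : T -> R) : Prop :=
  exists t : R, 0 <= t /\ forall x, g x = t * f x.

Definition same_ray (R : realType) (T : Type) (f g : T -> R) : Prop :=
  exists t : R, 0 < t /\ forall x, f x = t * g x.

(* f (nonzero, in the cone) generates an extremal ray of C(P):
   the ray {t f | t >= 0} is a face of C(P). *)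
Definition extremal_ray (R : realType) (d : Order.disp_t) (P : finPOrderType d)
  (f : P -> R) : Prop :=
  [/\ order_cone f, exists x, f x != 0 &
      forall a b : P -> R, order_cone a -> order_cone b ->
        on_ray f (fun x => a x + b x) -> on_ray f a /\ on_ray f b].

Definition num_extremal_rays (R : realType) (d : Order.disp_t) (P : finPOrderType d)
  (q : nat) : Prop :=
  exists g : 'I_q -> P -> R,
    [/\ forall i, extremal_ray (g i),
        forall i j, i != j -> ~ same_ray (g i) (g j) &
        forall f : P -> R, extremal_ray f -> exists i, same_ray f (g i)].

Definition nd_decomp (R : realType) (k : nat) (dd : 'I_k -> Order.disp_t)
  (P : forall j : 'I_k, finPOrderType (dd j))
  (T : (forall j : 'I_k, P j) -> R) (r : nat) : Prop :=
  exists v : 'I_r -> forall j : 'I_k, P j -> R,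
    (forall i j, order_cone (v i j)) /\
    forall x : (forall j : 'I_k, P j), T x = \sum_(i < r) \prod_(j < k) v i j (x j).

Definition in_tensor_cone (R : realType) (k : nat) (dd : 'I_k -> Order.disp_t)
  (P : forall j : 'I_k, finPOrderType (dd j)) (T : (forall j : 'I_k, P j) -> R) : Prop :=
  exists r, nd_decomp T r.

Definition nd_rank_le (R : realType) (k : nat) (dd : 'I_k -> Order.disp_t)
  (P : forall j : 'I_k, finPOrderType (dd j)) (T : (forall j : 'I_k, P j) -> R)
  (m : nat) : Prop :=
  exists2 r, (r <= m)%N & nd_decomp T r.

(* Every f in an order cone is a nonnegative combination of generators of its
   extremal rays, by induction on the size of the (up-closed) support of f.
   Subtracting (min of f on its support) times the indicator of the support
   leaves a function with smaller support.  A function constant on its support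
   is either extremal, or some decomposition on its ray has a summand a that is
   constant along the order on the support without being constant there;
   restricting f to a level set of a and to its complement then splits f into
   two such functions with smaller supports.
   Expanding every factor but the j0-th of each elementary tensor in these
   generators and absorbing all coefficients into the j0-th factor leaves one
   elementary tensor per choice of a generator for each coordinate j <> j0,
   i.e. prod_(j <> j0) q_j of them; the theorem takes j0 = k - 1. *)

From HB Require Import structures.
From mathcomp Require Import all_boot all_order all_algebra.
From mathcomp Require Import reals.
From mathcomp Require Import lra zify.
From Stdlib Require Import Classical.
Set Implicit Arguments. Unset Strict Implicit. Unset Printing Implicit Defensive.
Import Order.TTheory GRing.Theory Num.Theory.
Local Open Scope ring_scope.

Section OrderConeGeneration.
Variables (R : realType) (d : Order.disp_t) (P : finPOrderType d).
Implicit Types (f h a b : P -> R) (A : {set P}).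

Definition supp f : {set P} := [set x | f x != 0].

Definition const_on_supp f := {in supp f &, forall x y, f x = f y}.

Definition restrict A f x := if x \in A then f x else 0.

Lemma supp_upclosed f x y :
  order_cone f -> x \in supp f -> (x <= y)%O -> y \in supp f.
Proof.
move=> [f_ge0 f_mono]; rewrite !inE => fx0 le_xy.
by rewrite gt_eqF // (lt_le_trans _ (f_mono _ _ le_xy)) // lt0r fx0 f_ge0.
Qed.

Lemma order_cone_cst (c : R) : 0 <= c -> order_cone (fun _ : P => c).
Proof. by split=> // *; exact: lexx. Qed.

Lemma order_cone_sum (J : Type) (r : seq J) (c : J -> R) (h : J -> P -> R) :
  (forall i, 0 <= c i) -> (forall i, order_cone (h i)) ->
  order_cone (fun x => \sum_(i <- r) c i * h i x).
Proof.
move=> c_ge0 ch; split=> [x | x y le_xy].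
  by apply: sumr_ge0 => i _; rewrite mulr_ge0 ?(ch i).1.
by apply: ler_sum => i _; rewrite ler_wpM2l ?(ch i).2.
Qed.

Lemma supp_eq0 f : supp f = set0 -> forall x, f x = 0.
Proof. by move/setP=> supp0 x; apply/eqP; move: (supp0 x); rewrite !inE => /negbFE. Qed.

Lemma card_supp_lt f h x : supp h \subset supp f ->
  x \in supp f -> x \notin supp h -> (#|supp h| < #|supp f|)%N.
Proof. by move=> sub_hf fx hx; apply: proper_card; apply/properP; split=> //; exists x. Qed.

Lemma supp_restrict A f : supp (restrict A f) = supp f :&: A.
Proof.
by apply/setP => x; rewrite !inE /restrict; case: (x \in A); rewrite ?eqxx ?andbT ?andbF.
Qed.

Lemma restrict_setC A f x : f x = restrict A f x + restrict (~: A) f x.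
Proof. by rewrite /restrict inE; case: (x \in A); rewrite ?addr0 ?add0r. Qed.

Lemma order_cone_restrict A f : order_cone f ->
  (forall x y, x \in supp f -> x \in A -> (x <= y)%O -> y \in A) ->
  order_cone (restrict A f).
Proof.
move=> cf upA; have [f_ge0 f_mono] := cf.
have r_ge0 x : 0 <= restrict A f x by rewrite /restrict; case: ifP.
split=> // x y le_xy; rewrite {1}/restrict.
case: ifPn => [xA | _]; last exact: r_ge0.
have [fx0 | fx] := eqVneq (f x) 0; first by rewrite fx0.
have xf : x \in supp f by rewrite inE.
by rewrite /restrict (upA x y xf xA le_xy) f_mono.
Qed.

Lemma const_on_supp_restrict A f :
  const_on_supp f -> const_on_supp (restrict A f).
Proof.
move=> cst x y; rewrite !supp_restrict !inE /restrict.
by move=> /andP[fx ->] /andP[fy ->]; apply: cst; rewrite inE.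
Qed.

Lemma on_ray_const_on_supp f h : order_cone f -> const_on_supp f ->
  (forall x, 0 <= h x) -> (forall x, f x = 0 -> h x = 0) ->
  {in supp f &, forall x y, h x = h y} -> on_ray f h.
Proof.
move=> [f_ge0 _] cf h_ge0 h0 ch.
have [supp0 | [x0 fx0]] := set_0Vmem (supp f).
  by exists 0; split=> // x; rewrite mul0r h0 // supp_eq0.
have fx0_neq0 : f x0 != 0 by rewrite inE in fx0.
exists (h x0 / f x0); split; first by rewrite divr_ge0.
move=> x; have [fx_eq0 | fx] := eqVneq (f x) 0; first by rewrite fx_eq0 mulr0 h0.
have xf : x \in supp f by rewrite inE.
by rewrite (cf x x0) // divfK // (ch x x0).
Qed.

Lemma ray_summand_eq_le f a b x y : order_cone f -> const_on_supp f ->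
  order_cone a -> order_cone b -> on_ray f (fun z => a z + b z) ->
  x \in supp f -> (x <= y)%O -> a x = a y.
Proof.
move=> cf cstf [_ a_mono] [_ b_mono] [t [_ abE]] xf le_xy.
have yf := supp_upclosed cf xf le_xy.
have := a_mono _ _ le_xy; have := b_mono _ _ le_xy.
have := abE x; have := abE y; rewrite (cstf x y) //; lra.
Qed.

Lemma extremal_ray_const_on_supp f x0 :
  order_cone f -> const_on_supp f -> x0 \in supp f ->
  (forall a b, order_cone a -> order_cone b -> on_ray f (fun x => a x + b x) ->
     {in supp f &, forall x y, a x = a y}) ->
  extremal_ray f.
Proof.
move=> cf cstf x0f summand_const; split=> //; first by exists x0; rewrite inE in x0f.
move=> a b ca cb rab; have [t [_ abE]] := rab.
have ab0 x : f x = 0 -> a x = 0 /\ b x = 0.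
  move=> fx0; have := abE x; rewrite fx0 mulr0.
  by have := ca.1 x; have := cb.1 x; split; lra.
have cst_a := summand_const a b ca cb rab.
have [[a_ge0 _] [b_ge0 _]] := (ca, cb).
split; first by apply: on_ray_const_on_supp => // x /ab0[].
apply: on_ray_const_on_supp => // [x /ab0[] // | x y xf yf].
by have := abE x; have := abE y; rewrite (cstf x y) // (cst_a x y) //; lra.
Qed.

Definition conic_comb (I : finType) (g : I -> P -> R) f :=
  exists c : I -> R, (forall i, 0 <= c i) /\ forall x, f x = \sum_i c i * g i x.

Section ExtremalRaysGenerate.
Variables (I : finType) (g : I -> P -> R).
Hypothesis g_extremal_rays : forall f, extremal_ray f -> exists i, same_ray f (g i).

Lemma conic_comb0 f : (forall x, f x = 0) -> conic_comb g f.
Proof.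
move=> f0; exists (fun=> 0); split=> // x.
by rewrite f0 big1 // => i _; rewrite mul0r.
Qed.

Lemma conic_combD f1 f2 f : conic_comb g f1 -> conic_comb g f2 ->
  (forall x, f x = f1 x + f2 x) -> conic_comb g f.
Proof.
move=> [c1 [c1_ge0 f1E]] [c2 [c2_ge0 f2E]] fE.
exists (fun i => c1 i + c2 i); split=> [i|x]; first by rewrite addr_ge0.
by rewrite fE f1E f2E -big_split; apply: eq_bigr => i _; rewrite mulrDl.
Qed.

Lemma conic_comb_extremal f : extremal_ray f -> conic_comb g f.
Proof.
move=> /g_extremal_rays [i [t [t_gt0 fE]]].
exists (fun l => if l == i then t else 0); split=> [l|x].
  by case: ifP => // _; exact: ltW.
rewrite fE (bigD1 i) //= eqxx big1 ?addr0 // => l /negbTE ->.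
by rewrite mul0r.
Qed.

Lemma conic_comb_const_on_supp f :
  order_cone f -> const_on_supp f -> conic_comb g f.
Proof.
have [n] := ubnP #|supp f|; elim: n f => // n IH f; rewrite ltnS => le_fn cf cstf.
have [supp0 | [x0 x0f]] := set_0Vmem (supp f).
  by apply: conic_comb0; exact: supp_eq0.
have [[a [b [ca cb rab /exists_inP[x1 x1f /exists_inP[x2 x2f a12]]]]] | no_split] :=
  classic (exists a b, [/\ order_cone a, order_cone b, on_ray f (fun x => a x + b x)
    & [exists x1 in supp f, exists x2 in supp f, a x1 != a x2]]); last first.
  apply/conic_comb_extremal/(extremal_ray_const_on_supp cf cstf x0f).
  move=> a b ca cb rab x y xf yf; apply/eqP; apply: contra_notT no_split => neq.
  by exists a, b; split=> //; apply/exists_inP; exists x => //; apply/exists_inP; exists y.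
have IH_restrict (B : {set P}) z : z \in supp f -> z \notin B ->
    (forall x y, x \in supp f -> (x <= y)%O -> (x \in B) = (y \in B)) ->
    conic_comb g (restrict B f).
  move=> zf zB upB; apply: IH; last exact: const_on_supp_restrict.
    apply: leq_trans le_fn; apply: (card_supp_lt (x := z)) => //.
      by rewrite supp_restrict subsetIl.
    by rewrite supp_restrict inE (negbTE zB) andbF.
  by apply: order_cone_restrict => // x y xf xB le_xy; rewrite -(upB x y).
pose A := [set x | a x == a x1].
have upA x y : x \in supp f -> (x <= y)%O -> (x \in A) = (y \in A).
  by move=> xf le_xy; rewrite !inE (ray_summand_eq_le cf cstf ca cb rab xf le_xy).
have upAC x y : x \in supp f -> (x <= y)%O -> (x \in ~: A) = (y \in ~: A).
  by move=> xf le_xy; rewrite !in_setC (upA x y).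
apply: (conic_combD (IH_restrict A x2 x2f _ upA) (IH_restrict (~: A) x1 x1f _ upAC)).
- by rewrite inE eq_sym.
- by rewrite !inE eqxx.
- exact: restrict_setC.
Qed.

Lemma conic_comb_order_cone f : order_cone f -> conic_comb g f.
Proof.
have [n] := ubnP #|supp f|; elim: n f => // n IH f; rewrite ltnS => le_fn cf.
have [f_ge0 f_mono] := cf.
have [supp0 | [x0 x0f]] := set_0Vmem (supp f).
  by apply: conic_comb0; exact: supp_eq0.
case: (arg_minP f x0f) => m mf m_min; have {}mf : m \in supp f := mf.
pose f1 := restrict (supp f) (fun=> f m).
pose f2 x := f x - f1 x.
have f_out x : x \notin supp f -> f x = 0 by rewrite inE => /negbNE/eqP.
have f1_le x : f1 x <= f x.
  by rewrite /f1 /restrict; case: ifPn => [/m_min // | /f_out ->].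
apply: (conic_combD (f1 := f1) (f2 := f2)); last by move=> x; rewrite subrKC.
  apply: conic_comb_const_on_supp; last exact: const_on_supp_restrict.
  apply: order_cone_restrict => [|x y _ xf]; last exact: supp_upclosed.
  exact/order_cone_cst/f_ge0.
apply: IH.
  apply: leq_trans le_fn; apply: (card_supp_lt (x := m)) => //.
    apply/subsetP => x; apply: contraTT => xf.
    by rewrite inE /f2 /f1 /restrict (negbTE xf) f_out // subrr eqxx.
  by rewrite inE negbK /f2 /f1 /restrict mf subrr.
split=> [x | x y le_xy]; first by rewrite subr_ge0.
rewrite /f2 {1}/f1 /restrict; case: ifPn => [xf | /f_out ->]; last by rewrite subrr subr_ge0.
by rewrite /f1 /restrict (supp_upclosed cf xf le_xy) lerD2r f_mono.
Qed.

End ExtremalRaysGenerate.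
End OrderConeGeneration.

Lemma card_family_ord_lt (aT : finType) (M : nat) (n : aT -> nat) :
  (forall a, n a <= M)%N ->
  #|family (fun a => [pred l : 'I_M | (l < n a)%N])| = (\prod_a n a)%N.
Proof.
move=> le_nM; rewrite card_family foldrE big_map big_enum /=.
apply: eq_bigr => a _; rewrite -[RHS](card_ord (n a)).
rewrite -!sum1_card (big_ord_widen _ (fun=> 1%N) (le_nM a)).
exact: eq_bigl.
Qed.

Section TensorCone.
Variables (R : realType) (k : nat) (dd : 'I_k -> Order.disp_t).
Variable P : forall j : 'I_k, finPOrderType (dd j).

Lemma nd_decomp_big (S : finType) (A : {pred S}) (u : S -> forall j, P j -> R) T :
  (forall s j, order_cone (u s j)) ->
  (forall x, T x = \sum_(s in A) \prod_j u s j (x j)) -> nd_decomp T #|A|.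
Proof.
by move=> cu TE; exists (fun i => u (enum_val i)); split=> // x; rewrite TE big_enum_val.
Qed.

Lemma nd_decomp_generated (j0 : 'I_k) (q : 'I_k -> nat)
    (g : forall j, 'I_(q j) -> P j -> R) (T : (forall j, P j) -> R) r :
  (forall j l, order_cone (g j l)) ->
  (forall j f, order_cone f -> conic_comb (g j) f) ->
  nd_decomp T r -> nd_decomp T (\prod_(j | j != j0) q j)%N.
Proof.
move=> cg gen [v [cv TE]].
have [c cP] := fin_all_exists (fun i => fin_all_exists (fun j => gen j _ (cv i j))).
(* Generators are reindexed by a common 'I_M and padded with 0, so that
   bigA_distr_big_dep applies; coordinate j0 only uses the index 0. *)
pose M := (\max_j q j).+1.
pose n j := if j == j0 then 1%N else q j.
have le_nM j : (n j <= M)%N.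
  by rewrite /n; case: ifP => // _; rewrite ltnW // ltnS leq_bigmax.
pose Q j := [pred l : 'I_M | (l < n j)%N].
pose cN i j (l : 'I_M) := oapp (c i j) 0 (insub (val l)).
pose gN j (l : 'I_M) := oapp (g j) (fun=> 0) (insub (val l)).
pose u (f : {ffun 'I_k -> 'I_M}) j y :=
  if j == j0 then \sum_i (\prod_(j' | j' != j0) cN i j' (f j')) * v i j y
  else gN j (f j) y.
have -> : (\prod_(j | j != j0) q j = #|family Q|)%N.
  rewrite card_family_ord_lt // [RHS](bigD1 j0) //= {1}/n eqxx mul1n.
  by apply: eq_bigr => j /negbTE nj; rewrite /n nj.
apply: (nd_decomp_big (u := u)) => [f j | x].
  rewrite /u; case: eqP => _.
    apply: order_cone_sum => [i|i]; last exact: cv.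
    apply: prodr_ge0 => j' _; rewrite /cN.
    by case: insub => [l|] //=; case: (cP i j').
  by rewrite /gN; case: insub => [l|] /=; [exact: cg | exact: order_cone_cst].
pose F i j l := if j == j0 then v i j (x j) else cN i j l * gN j l (x j).
have sumF i j : \sum_(l | Q j l) F i j l = v i j (x j).
  rewrite /F /Q /n; case: eqP => _.
    by rewrite (big_pred1 ord0) // => l; rewrite /= ltnS leqn0.
  pose G l := oapp (c i j) 0 (insub l) * oapp (g j) (fun=> 0) (insub l) (x j).
  rewrite (proj2 (cP i j)) [RHS](eq_bigr (G \o val)) => [|l _]; last by rewrite /G /= valK.
  by rewrite (big_ord_widen M G) // ltnW // ltnS leq_bigmax.
rewrite TE; transitivity (\sum_i \prod_j \sum_(l | Q j l) F i j l).
  by apply: eq_bigr => i _; apply: eq_bigr => j _; rewrite sumF.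
rewrite (eq_bigr _ (fun i _ => bigA_distr_big_dep _ _)) exchange_big /=.
apply: eq_bigr => f _; rewrite (bigD1 j0) //= {1}/u eqxx mulr_suml.
apply: eq_bigr => i _; rewrite (bigD1 j0) //= {1}/F eqxx.
have Fne j : j != j0 -> F i j (f j) = cN i j (f j) * gN j (f j) (x j).
  by rewrite /F => /negbTE ->.
have une j : j != j0 -> u f j (x j) = gN j (f j) (x j).
  by rewrite /u => /negbTE ->.
by rewrite (eq_bigr _ Fne) big_split (eq_bigr _ une) /= mulrCA mulrA.
Qed.

End TensorCone.

Theorem lemma6 (R : realType) (k : nat) (dd : 'I_k -> Order.disp_t)
  (P : forall j : 'I_k, finPOrderType (dd j)) (q : 'I_k -> nat)
  (hk : (0 < k)%N)
  (hq : forall j, num_extremal_rays R (P j) (q j))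
  (hsort : forall i j : 'I_k, (i <= j)%N -> (q i <= q j)%N) :
  forall T : (forall j : 'I_k, P j) -> R,
    in_tensor_cone T ->
    nd_rank_le T (\prod_(j < k | (j.+1 < k)%N) q j)%N.
Proof.
move=> T [r decT].
have [g gP] := fin_all_exists hq.
have jlastP : (k.-1 < k)%N by rewrite ltn_predL.
pose jlast := Ordinal jlastP.
have -> : (\prod_(j < k | (j.+1 < k)%N) q j = \prod_(j | j != jlast) q j)%N.
  by apply: eq_bigl => -[j ltjk]; rewrite -val_eqE /=; lia.
exists (\prod_(j | j != jlast) q j)%N => //.
apply: (nd_decomp_generated jlast (g := g) _ _ decT) => [j l | j].
  by have [/(_ l) [] ] := gP j.
by have [_ _ gen] := gP j; exact: conic_comb_order_cone.
Qed.
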